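(* Let $\overline{X}\in\mathbb{R}^{d\times n}$ be a matrix with all columns equal to some $\overline{\mathbf{x}}\in\mathbb{R}^d$, let $\xi = (\xi_1,\dots,\xi_n)$ with $\xi_i\sim\mathcal{D}_i$ independent, and let $W^*(\xi)\in\mathcal{M}_w$ be any mixing matrix (possibly depending on $\xi$). Assume $\frac1n\sum_{i=1}^n\mathbb{E}_{\xi_i}\|\nabla F_i(\mathbf{x},\xi_i) - \nabla f_i(\mathbf{x})\|^2\leq\sigma^2$ for all $\mathbf{x}$. Then $$\mathbb{E}\big\|(\partial f(\overline{X}) - \overline{\partial f}(\overline{X}))W^*(\xi)\big\|_F^2 \leq 2\,\mathbb{E}\big\|(\partial f(\overline{X},\xi) - \overline{\partial f}(\overline{X},\xi))W^*(\xi)\big\|_F^2 + 2n\sigma^2.$$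
   Context: $f_i(\mathbf{x}) = \mathbb{E}_{\xi\sim\mathcal{D}_i}F_i(\mathbf{x},\xi)$. For $X = [\mathbf{x}_1,\dots,\mathbf{x}_n]$: $\partial f(X) = [\nabla f_1(\mathbf{x}_1),\dots,\nabla f_n(\mathbf{x}_n)]$, $\partial f(X,\xi) = [\nabla F_1(\mathbf{x}_1,\xi_1),\dots,\nabla F_n(\mathbf{x}_n,\xi_n)]$, and for any $Y\in\mathbb{R}^{d\times n}$, $\overline{Y} = Y\frac{\mathbf{1}\mathbf{1}^\top}{n}$ (so $\overline{\partial f}(X) = \partial f(X)\frac{\mathbf{1}\mathbf{1}^\top}{n}$, $\overline{\partial f}(X,\xi) = \partial f(X,\xi)\frac{\mathbf{1}\mathbf{1}^\top}{n}$). Given a graph $G=(V,E)$ on $n$ nodes, $\mathcal{M}_w = \{W\in\mathbb{R}^{n\times n}: W\mathbf{1} = \mathbf{1},\ \mathbf{1}^\top W = \mathbf{1}^\top,\ 0\le w_{ij}\le1,\ w_{ij}=0\ \forall(i,j)\notin E\}$. Expectations are over $\xi$. *)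

From HB Require Import structures.
From mathcomp Require Import all_boot all_order all_algebra.
From mathcomp Require Import all_classical all_reals all_analysis.
Set Implicit Arguments. Unset Strict Implicit. Unset Printing Implicit Defensive.
Import Order.TTheory GRing.Theory Num.Theory.
Local Open Scope ring_scope.
Local Open Scope classical_set_scope.

Definition sqnorm (R : realType) (d : nat) (v : 'cV[R]_d) : R :=
  \sum_(j < d) v j 0 ^+ 2.

Definition sqfrob (R : realType) (m k : nat) (M : 'M[R]_(m, k)) : R :=
  \sum_(i < m) \sum_(j < k) M i j ^+ 2.

Definition mean_mx (R : realType) (d n : nat) (Y : 'M[R]_(d, n)) : 'M[R]_(d, n) :=
  Y *m const_mx (n%:R^-1).

Definition rep_col (R : realType) (d n : nat) (x : 'cV[R]_d) : 'M[R]_(d, n) :=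
  \matrix_(j < d, i < n) x j 0.

Definition dgrad (R : realType) (d n : nat) (g : 'I_n -> 'cV[R]_d -> 'cV[R]_d)
  (X : 'M[R]_(d, n)) : 'M[R]_(d, n) :=
  \matrix_(j < d, i < n) (g i (col i X)) j 0.

Definition sgrad (R : realType) (T : Type) (d n : nat)
  (G : 'I_n -> 'cV[R]_d -> T -> 'cV[R]_d) (X : 'M[R]_(d, n)) (xi : 'I_n -> T)
  : 'M[R]_(d, n) :=
  \matrix_(j < d, i < n) (G i (col i X) (xi i)) j 0.

Definition mixing_set (R : realType) (n : nat) (E : rel 'I_n) : set 'M[R]_n :=
  [set W | W *m (const_mx 1 : 'cV[R]_n) = const_mx 1 /\
           (const_mx 1 : 'rV[R]_n) *m W = const_mx 1 /\
           (forall i j, 0 <= W i j <= 1) /\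
           (forall i j, ~~ E i j -> W i j = 0)].

Definition mutually_independent (dO dT : measure_display) (R : realType)
  (Omega : measurableType dO) (T : measurableType dT) (P : probability Omega R)
  (n : nat) (xi : 'I_n -> Omega -> T) : Prop :=
  forall A : 'I_n -> set T, (forall i, measurable (A i)) ->
    P (\bigcap_(i in [set: 'I_n]) (xi i @^-1` A i)) =
    (\prod_(i < n) P (xi i @^-1` A i))%E.

(** Fix a sample and let [S] and [D] be the stochastic and the true gradient
    matrices at [Xbar].  Centring [Y |-> Y - mean_mx Y] is linear, so
    [(D - mean D) W = (S - mean S) W - ((S - D) - mean (S - D)) W], and
    [|a - b|^2 <= 2 |a|^2 + 2 |b|^2].  Centring and right multiplication by a
    doubly stochastic [W] are both Frobenius contractions (the latter by
    Jensen's inequality down each column of [W]), so the last term is at most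
    [2 |S - D|_F^2 = 2 sum_i |G_i - g_i|^2], whose expectation is at most
    [2 n sigma^2]. *)

From HB Require Import structures.
From mathcomp Require Import all_boot all_order all_algebra.
From mathcomp Require Import all_classical all_reals all_analysis.
From mathcomp Require Import measurable_realfun.
From mathcomp Require Import ring lra.
Import Order.TTheory GRing.Theory Num.Theory.
Set Implicit Arguments. Unset Strict Implicit. Unset Printing Implicit Defensive.
Local Open Scope ring_scope.

Lemma sqr_convex_comb_le (R : realFieldType) n (a u : 'I_n -> R) :
  (forall k, 0 <= a k) -> \sum_k a k = 1 ->
  (\sum_k a k * u k) ^+ 2 <= \sum_k a k * u k ^+ 2.
Proof.
move=> a_ge0 a_sum1.
have spreadE t : \sum_k a k * (u k - t) ^+ 2 =
    \sum_k a k * u k ^+ 2 - 2 * t * \sum_k a k * u k + t ^+ 2 * \sum_k a k.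
  by rewrite !mulr_sumr -sumrB -big_split /=; apply: eq_bigr => k _; ring.
have : 0 <= \sum_k a k * (u k - \sum_l a l * u l) ^+ 2.
  by apply: sumr_ge0 => k _; rewrite mulr_ge0 ?sqr_ge0.
rewrite spreadE a_sum1; nra.
Qed.

Lemma sum_sqr_sub_mean_le (R : realFieldType) n (v : 'I_n -> R) :
  \sum_k (v k - \sum_l v l * n%:R^-1) ^+ 2 <= \sum_k v k ^+ 2.
Proof.
case: n v => [|n] v; first by rewrite !big_ord0.
set m := \sum_l v l * n.+1%:R^-1.
have sum_nm : \sum_k v k = n.+1%:R * m.
  by rewrite /m -mulr_suml mulrCA mulfV ?mulr1 ?pnatr_eq0.
have -> : \sum_k (v k - m) ^+ 2 =
    \sum_k v k ^+ 2 - 2 * m * \sum_k v k + n.+1%:R * m ^+ 2.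
  have -> : n.+1%:R * m ^+ 2 = \sum_(k < n.+1) m ^+ 2.
    by rewrite sumr_const card_ord mulr_natl.
  rewrite mulr_sumr -sumrB -big_split /=.
  by apply: eq_bigr => k _; ring.
rewrite sum_nm; have := mulr_ge0 (ler0n R n.+1) (sqr_ge0 m); nra.
Qed.

Definition doubly_stochastic (R : numDomainType) n (W : 'M[R]_n) : Prop :=
  [/\ forall i j, 0 <= W i j, forall i, \sum_j W i j = 1 & forall j, \sum_i W i j = 1].

Section Frobenius.
Variable R : realType.

Lemma sqfrob_ge0 p q (M : 'M[R]_(p, q)) : 0 <= sqfrob M.
Proof. by apply: sumr_ge0 => i _; apply: sumr_ge0 => j _; apply: sqr_ge0. Qed.

Lemma sqnorm_ge0 d (v : 'cV[R]_d) : 0 <= sqnorm v.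
Proof. by apply: sumr_ge0 => j _; apply: sqr_ge0. Qed.

Lemma sqfrobB_le p q (X Y : 'M[R]_(p, q)) :
  sqfrob (X - Y) <= 2 * sqfrob X + 2 * sqfrob Y.
Proof.
rewrite /sqfrob !mulr_sumr -big_split /=; apply: ler_sum => i _.
rewrite !mulr_sumr -big_split /=; apply: ler_sum => j _; rewrite !mxE.
have := sqr_ge0 (X i j + Y i j); nra.
Qed.

Lemma mixing_set_doubly_stochastic n (E : rel 'I_n) (W : 'M[R]_n) :
  mixing_set E W -> doubly_stochastic W.
Proof.
move=> [W1 [W1' [W01 _]]]; split.
- by move=> i j; case/andP: (W01 i j).
- move=> i; have /matrixP/(_ i ord0) := W1; rewrite !mxE => <-.
  by apply: eq_bigr => j _; rewrite mxE mulr1.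
- move=> j; have /matrixP/(_ ord0 j) := W1'; rewrite !mxE => <-.
  by apply: eq_bigr => i _; rewrite mxE mul1r.
Qed.

Lemma sqfrob_mulmx_doubly_stochastic_le p n (M : 'M[R]_(p, n)) (W : 'M[R]_n) :
  doubly_stochastic W -> sqfrob (M *m W) <= sqfrob M.
Proof.
move=> [W_ge0 W_row W_col]; rewrite /sqfrob; apply: ler_sum => r _.
apply: (@le_trans _ _ (\sum_c \sum_k W k c * M r k ^+ 2)).
  apply: ler_sum => c _; rewrite mxE.
  under eq_bigr => k _ do rewrite mulrC.
  exact: sqr_convex_comb_le.
rewrite exchange_big /=.
by under eq_bigr => k _ do rewrite -mulr_suml W_row mul1r.
Qed.

Lemma sqfrob_center_le p n (M : 'M[R]_(p, n)) : sqfrob (M - mean_mx M) <= sqfrob M.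
Proof.
rewrite /sqfrob; apply: ler_sum => r _.
under eq_bigr => c _ do (rewrite !mxE; under eq_bigr => l _ do rewrite mxE).
exact: sum_sqr_sub_mean_le.
Qed.

Lemma sqfrob_center_mulmx_le d n (D S : 'M[R]_(d, n)) (W : 'M[R]_n) :
  doubly_stochastic W ->
  sqfrob ((D - mean_mx D) *m W) <=
  2 * sqfrob ((S - mean_mx S) *m W) + 2 * sqfrob (S - D).
Proof.
move=> W_ds.
have -> : (D - mean_mx D) *m W =
    (S - mean_mx S) *m W - ((S - D) - mean_mx (S - D)) *m W.
  by rewrite /mean_mx !mulmxBl; apply/matrixP => i j; rewrite !mxE; ring.
apply: (le_trans (sqfrobB_le _ _)); rewrite lerD2l ler_pM2l ?ltr0n //.
exact: le_trans (sqfrob_mulmx_doubly_stochastic_le _ W_ds) (sqfrob_center_le _).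
Qed.

Lemma sqfrob_sgrad_sub_dgrad_rep_col (T : Type) d n
    (G : 'I_n -> 'cV[R]_d -> T -> 'cV[R]_d) (g : 'I_n -> 'cV[R]_d -> 'cV[R]_d)
    (x : 'cV[R]_d) (s : 'I_n -> T) :
  sqfrob (sgrad G (rep_col n x) s - dgrad g (rep_col n x)) =
  \sum_i sqnorm (G i x (s i) - g i x).
Proof.
have col_rep i : col i (rep_col n x) = x.
  by apply/matrixP => j k; rewrite !mxE (ord1 k).
rewrite /sqfrob /sqnorm exchange_big /=.
by apply: eq_bigr => i _; apply: eq_bigr => j _; rewrite !mxE col_rep.
Qed.

End Frobenius.

Section MatrixMeasurability.
Variables (R : realType) (dO : measure_display) (Omega : measurableType dO).

Definition mx_measurable p q (M : Omega -> 'M[R]_(p, q)) : Prop :=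
  forall i j, measurable_fun setT (fun w => M w i j).

Lemma mx_measurable_cst p q (C : 'M[R]_(p, q)) : mx_measurable (fun _ => C).
Proof. by move=> i j; apply: measurable_cst. Qed.

Lemma mx_measurableB p q (M N : Omega -> 'M[R]_(p, q)) :
  mx_measurable M -> mx_measurable N -> mx_measurable (fun w => M w - N w).
Proof.
move=> mM mN i j; under eq_fun => w do rewrite !mxE.
exact: measurable_funB.
Qed.

Lemma mx_measurableM p q r (M : Omega -> 'M[R]_(p, q)) (N : Omega -> 'M[R]_(q, r)) :
  mx_measurable M -> mx_measurable N -> mx_measurable (fun w => M w *m N w).
Proof.
move=> mM mN i j; under eq_fun => w do rewrite !mxE.
by apply: measurable_sum => k; apply: measurable_funM.
Qed.

Lemma mx_measurable_mean p q (M : Omega -> 'M[R]_(p, q)) :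
  mx_measurable M -> mx_measurable (fun w => mean_mx (M w)).
Proof. by move=> mM; apply: mx_measurableM mM (mx_measurable_cst _). Qed.

Lemma mx_measurable_sgrad (dT : measure_display) (T : measurableType dT) d n
    (G : 'I_n -> 'cV[R]_d -> T -> 'cV[R]_d) (xi : 'I_n -> Omega -> T)
    (X : 'M[R]_(d, n)) :
  (forall i, measurable_fun setT (xi i)) ->
  (forall i x j, measurable_fun setT (fun t => G i x t j 0)) ->
  mx_measurable (fun w => sgrad G X (fun i => xi i w)).
Proof.
move=> mxi mG j i; under eq_fun => w do rewrite mxE.
exact: (measurableT_comp (mG i _ j) (mxi i)).
Qed.

Lemma measurable_sqfrob p q (M : Omega -> 'M[R]_(p, q)) :
  mx_measurable M -> measurable_fun setT (fun w => sqfrob (M w)).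
Proof.
move=> mM; apply: measurable_sum => i; apply: measurable_sum => j.
exact: measurable_funX.
Qed.

Lemma measurable_sqnorm d (v : Omega -> 'cV[R]_d) :
  mx_measurable v -> measurable_fun setT (fun w => sqnorm (v w)).
Proof. by move=> mv; apply: measurable_sum => j; apply: measurable_funX. Qed.

End MatrixMeasurability.

Section Integration.
Local Open Scope ereal_scope.

Lemma ge0_le_integral_linear_bound (dT : measure_display) (T : measurableType dT)
    (R : realType) (mu : {measure set T -> \bar R}) (I : finType)
    (f b : T -> R) (h : I -> T -> R) (c : R) :
  (0 <= c)%R ->
  measurable_fun setT f -> measurable_fun setT b ->
  (forall i, measurable_fun setT (h i)) ->
  (forall t, 0 <= f t)%R -> (forall t, 0 <= b t)%R -> (forall i t, 0 <= h i t)%R ->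
  (forall t, f t <= c * b t + c * \sum_i h i t)%R ->
  \int[mu]_t (f t)%:E <= c%:E * \int[mu]_t (b t)%:E + c%:E * \sum_i \int[mu]_t (h i t)%:E.
Proof.
move=> c_ge0 mf mb mh f_ge0 b_ge0 h_ge0 f_le.
have mhs : measurable_fun setT (fun t => \sum_i h i t)%R by exact: measurable_sum.
have hs_ge0 t : (0 <= \sum_i h i t)%R by apply: sumr_ge0.
have mcb : measurable_fun setT (fun t => (c * b t)%:E).
  by apply/measurable_EFinP; apply: measurable_funM => //; apply: measurable_cst.
have mchs : measurable_fun setT (fun t => (c * \sum_i h i t)%:E).
  by apply/measurable_EFinP; apply: measurable_funM => //; apply: measurable_cst.
apply: (@le_trans _ _ (\int[mu]_t ((c * b t)%:E + (c * \sum_i h i t)%:E))).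
  apply: ge0_le_integral => //.
  - by move=> t _; rewrite lee_fin.
  - by apply/measurable_EFinP.
  - by apply: emeasurable_funD.
  - by move=> t _; rewrite -EFinD lee_fin.
rewrite ge0_integralD //; last 2 first.
- by move=> t _; rewrite lee_fin mulr_ge0.
- by move=> t _; rewrite lee_fin mulr_ge0.
under eq_integral => t _ do rewrite EFinM.
under [X in _ + X]eq_integral => t _ do rewrite EFinM -sumEFin.
rewrite !ge0_integralZl_EFin //; first last.
- by apply/measurable_EFinP.
- by move=> t _; rewrite lee_fin.
- by apply: emeasurable_sum => i; apply/measurable_EFinP.
- by move=> t _; rewrite sume_ge0 // => i _; rewrite lee_fin.
by rewrite ge0_integral_sum // => [i|i t _]; [apply/measurable_EFinP | rewrite lee_fin].
Qed.

Lemma sume_le_of_mean_le (R : realType) n (a : 'I_n -> \bar R) (s : R) :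
  (forall i, 0 <= a i) -> (n%:R^-1)%:E * \sum_i a i <= s%:E ->
  \sum_i a i <= (n%:R * s)%:E.
Proof.
case: n a => [|n] a a_ge0; first by rewrite big_ord0 mul0r.
have : 0 <= \sum_i a i by apply: sume_ge0.
case: (\sum_i a i) => [x | |] //= x_ge0.
- rewrite -EFinM !lee_fin => mean_le.
  by rewrite -(ler_pM2l (ltr0Sn _ n)) mulrA mulfV ?mul1r ?pnatr_eq0 in mean_le.
- by rewrite gt0_muley ?lte_fin ?invr_gt0 ?ltr0Sn.
Qed.

End Integration.

Local Open Scope classical_set_scope.

Theorem proposition2 (R : realType) (dO dT : measure_display)
  (Omega : measurableType dO) (T : measurableType dT) (P : probability Omega R)
  (d n : nat) (E : rel 'I_n)
  (xi : 'I_n -> Omega -> T)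
  (G : 'I_n -> 'cV[R]_d -> T -> 'cV[R]_d)
  (g : 'I_n -> 'cV[R]_d -> 'cV[R]_d)
  (W : Omega -> 'M[R]_n) (sigma : R) (xbar : 'cV[R]_d) :
  (forall i, measurable_fun setT (xi i)) ->
  mutually_independent P xi ->
  (forall i x j, measurable_fun setT (fun t => G i x t j 0)) ->
  (forall i j, measurable_fun setT (fun w => W w i j)) ->
  (forall w, mixing_set E (W w)) ->
  (forall x : 'cV[R]_d,
     ((n%:R^-1)%:E * \sum_(i < n) \int[P]_w (sqnorm (G i x (xi i w) - g i x))%:E
       <= (sigma ^+ 2)%:E)%E) ->
  let Xb : 'M[R]_(d, n) := rep_col n xbar in
  (\int[P]_w (sqfrob ((dgrad g Xb - mean_mx (dgrad g Xb)) *m W w))%:E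
   <= 2%:E * \int[P]_w
        (sqfrob ((sgrad G Xb (fun i => xi i w) - mean_mx (sgrad G Xb (fun i => xi i w)))
                 *m W w))%:E
      + (2 * n%:R * sigma ^+ 2)%:E)%E.
Proof.
move=> mxi _ mG mW mixW var_le; cbv zeta; set Xb := rep_col n xbar.
have mS := mx_measurable_sgrad Xb mxi mG.
have mnoise i : measurable_fun setT (fun w => sqnorm (G i xbar (xi i w) - g i xbar)).
  apply: measurable_sqnorm; apply: mx_measurableB (mx_measurable_cst _) => j k.
  by rewrite (ord1 k); exact: measurableT_comp (mG i xbar j) (mxi i).
apply: le_trans (ge0_le_integral_linear_bound P (c := 2) _ _ _ mnoise _ _ _ _) _.
- by [].
- exact/measurable_sqfrob/(mx_measurableM (mx_measurable_cst _) mW).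
- exact/measurable_sqfrob/(mx_measurableM (mx_measurableB mS (mx_measurable_mean mS)) mW).
- by move=> w; apply: sqfrob_ge0.
- by move=> w; apply: sqfrob_ge0.
- by move=> i w; apply: sqnorm_ge0.
- move=> w; rewrite -sqfrob_sgrad_sub_dgrad_rep_col.
  exact/sqfrob_center_mulmx_le/mixing_set_doubly_stochastic/mixW.
apply: leeD2l; rewrite -mulrA EFinM lee_wpmul2l ?lee_fin //.
apply: sume_le_of_mean_le (var_le xbar) => i.
by apply: integral_ge0 => w _; rewrite lee_fin sqnorm_ge0.
Qed.
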